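(* Let $h,v$ be permutations of $\Lambda=\{1,\dots,d\}$, $M\ge0$ an integer, and let $(\mu_n,\sigma_n)_{n\in\mathbb{Z}}\in(\Lambda\times\{L,R\})^{\mathbb{Z}}$ be a walk on $\Gamma^M$. Then for every finite word $w$ occurring in $(\mu_n,\sigma_n)$, the sets $A(w)$ and $D(w)$ each contain at most two letters, $A(w)$ is a $\pi_1^M$-interval, and $D(w)$ is a $\pi_0$-interval.
   Context: $\Gamma^M$ is the directed multigraph on vertex set $\Lambda$ where each vertex $\lambda$ has an edge labeled $L$ to $vh^M(\lambda)$ and an edge labeled $R$ to $vh^{M+1}(\lambda)$; a walk on $\Gamma^M$ is a sequence $(\mu_n,\sigma_n)$ with $\mu_{n+1}=vh^M(\mu_n)$ if $\sigma_n=L$ and $\mu_{n+1}=vh^{M+1}(\mu_n)$ if $\sigma_n=R$. For a finite word $w$ occurring in the sequence, $A(w)$ is the set of letters $a\in\Lambda\times\{L,R\}$ such that $aw$ occurs, and $D(w)$ the set of letters $b$ such that $wb$ occurs. $\pi_0,\pi_1^M:\Lambda\times\{L,R\}\to\{1,\dots,2d\}$ are $\pi_0(\lambda,L)=2\lambda-1$, $\pi_0(\lambda,R)=2\lambda$, $\pi_1^M(\lambda,L)=2vh^M(\lambda)$, $\pi_1^M(\lambda,R)=2vh^{M+1}(\lambda)-1$. For a bijection $\pi$, a $\pi$-interval is a set of letters whose $\pi$-values form a set of consecutive integers. *)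

From mathcomp Require Import all_boot all_order all_algebra all_fingroup.
Set Implicit Arguments. Unset Strict Implicit. Unset Printing Implicit Defensive.

(* Lambda = {1,...,d} is represented by 'I_d, element i : 'I_d standing for i+1. *)
Inductive LR := L | R.

Definition letter (d : nat) : Type := ('I_d * LR)%type.

Definition vh (d : nat) (h v : {perm 'I_d}) (k : nat) (l : 'I_d) : 'I_d :=
  v ((h ^+ k)%g l).

Definition is_walk (d : nat) (h v : {perm 'I_d}) (M : nat) (x : int -> letter d) :=
  forall n : int,
    (x (n + 1)%R).1 = (if (x n).2 is L then vh h v M (x n).1 else vh h v M.+1 (x n).1).

Definition occurs (d : nat) (x : int -> letter d) (w : seq (letter d)) : Prop :=
  exists n : int, [seq x (n + i%:Z)%R | i <- iota 0 (size w)] = w.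

Definition Aset (d : nat) (x : int -> letter d) (w : seq (letter d)) (a : letter d) : Prop :=
  occurs x (a :: w).
Definition Dset (d : nat) (x : int -> letter d) (w : seq (letter d)) (b : letter d) : Prop :=
  occurs x (rcons w b).

(* pi_0 and pi_1^M, with values in {1,...,2d}; lambda = i+1 for i : 'I_d. *)
Definition pi0 (d : nat) (a : letter d) : nat :=
  match a with
  | (l, L) => 2 * l.+1 - 1
  | (l, R) => 2 * l.+1
  end.
Definition pi1 (d : nat) (h v : {perm 'I_d}) (M : nat) (a : letter d) : nat :=
  match a with
  | (l, L) => 2 * (vh h v M l).+1
  | (l, R) => 2 * (vh h v M.+1 l).+1 - 1
  end.

Definition pi_interval (d : nat) (pi : letter d -> nat) (P : letter d -> Prop) : Prop :=
  forall a b, P a -> P b -> forall k, pi a <= k <= pi b -> exists c, P c /\ pi c = k.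

Definition at_most_two (d : nat) (P : letter d -> Prop) : Prop :=
  exists a b : letter d, forall c, P c -> c = a \/ c = b.

From mathcomp Require Import all_boot all_order all_algebra all_fingroup.
From mathcomp Require Import zify.
Import GRing.Theory.
Set Implicit Arguments. Unset Strict Implicit. Unset Printing Implicit Defensive.

(* In a walk the letter (mu, sigma) determines the next vertex, vh^M mu or
   vh^(M+1) mu.  Hence a letter preceding w must lead to the first vertex of w;
   as vh^M and vh^(M+1) are bijections there is one such letter per label, and
   their pi_1^M-values 2m and 2m-1 are consecutive.  A letter following w sits
   at the vertex lambda determined by the last letter of w, so it is (lambda, L)
   or (lambda, R), with consecutive pi_0-values 2 lambda - 1 and 2 lambda. *)

Section Letters.

Variable d : nat.
Implicit Types (P Q : letter d -> Prop) (pi : letter d -> nat).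

Lemma at_most_two_sub P Q :
  (forall c, P c -> Q c) -> at_most_two Q -> at_most_two P.
Proof. by move=> PQ [a [b ab]]; exists a, b => c /PQ /ab. Qed.

Lemma at_most_two_vertex (l : 'I_d) : at_most_two (fun c : letter d => c.1 = l).
Proof. by exists (l, L), (l, R) => -[c []] /= ->; [left | right]. Qed.

Lemma pi_interval_consecutive P pi (N : nat) :
  (forall c, P c -> pi c = N \/ pi c = N.+1) -> pi_interval pi P.
Proof.
move=> piP a b Pa Pb k /andP[le_ak le_kb].
have [ea|ea] := piP a Pa; have [eb|eb] := piP b Pb.
- by exists a; split => //; lia.
- have [->|neN] := eqVneq k N; first by exists a.
  by exists b; split => //; lia.
- lia.
- by exists a; split => //; lia.
Qed.

Lemma pi0_consecutive (c : letter d) :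
  pi0 c = (2 * c.1).+1 \/ pi0 c = (2 * c.1).+2.
Proof. by case: c => l [] /=; [left | right]; rewrite mulnS. Qed.

Variables (h v : {perm 'I_d}) (M : nat).

Definition walk_next (c : letter d) : 'I_d :=
  if c.2 is L then vh h v M c.1 else vh h v M.+1 c.1.

Lemma vh_inj (k : nat) : injective (vh h v k).
Proof. by move=> l l'; rewrite /vh => /perm_inj /perm_inj. Qed.

Lemma at_most_two_walk_next (m : 'I_d) :
  at_most_two (fun c => walk_next c = m).
Proof.
have [lL vhL] : exists l, vh h v M l = m.
  by exists (((h ^+ M * v)^-1)%g m); rewrite /vh -permM permKV.
have [lR vhR] : exists l, vh h v M.+1 l = m.
  by exists (((h ^+ M.+1 * v)^-1)%g m); rewrite /vh -permM permKV.
exists (lL, L), (lR, R) => -[c []] /=.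
- by rewrite /walk_next /= -vhL => /vh_inj ->; left.
- by rewrite /walk_next /= -vhR => /vh_inj ->; right.
Qed.

Lemma pi1_consecutive (c : letter d) :
  pi1 h v M c = (2 * walk_next c).+1 \/ pi1 h v M c = (2 * walk_next c).+2.
Proof. by case: c => l [] /=; rewrite /walk_next /= mulnS; [right | left]. Qed.

End Letters.

Section Walk.

Variables (d : nat) (h v : {perm 'I_d}) (M : nat) (x : int -> letter d).
Hypothesis walk_x : is_walk h v M x.

Lemma walk_nextE (n : int) : (x (n + 1)%R).1 = walk_next h v M (x n).
Proof. exact: walk_x. Qed.

Lemma nth_window (n : int) (s : seq (letter d)) (i : nat) (c0 : letter d) :
  [seq x (n + j%:Z)%R | j <- iota 0 (size s)] = s -> i < size s ->
  nth c0 s i = x (n + i%:Z)%R.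
Proof. by move=> {2}<- lt_is; rewrite (nth_map 0) ?size_iota // nth_iota. Qed.

Lemma Aset_walk_next (c : letter d) (w : seq (letter d)) (a : letter d) :
  Aset x (c :: w) a -> walk_next h v M a = c.1.
Proof.
move=> [n win].
have /= := nth_window c win (isT : 0 < size (a :: c :: w)).
have /= := nth_window c win (isT : 1 < size (a :: c :: w)).
by rewrite addr0 => -> ->; rewrite walk_nextE.
Qed.

Lemma Dset_vertex (c : letter d) (w : seq (letter d)) (b : letter d) :
  Dset x (c :: w) b -> b.1 = walk_next h v M (last c w).
Proof.
move=> [n win].
have lt_lastb : (size w).+1 < size (rcons (c :: w) b) by rewrite size_rcons.
have := nth_window c win lt_lastb.
have := nth_window c win (ltn_trans (ltnSn _) lt_lastb).
rewrite !nth_rcons /= ltnn eqxx ltnSn -last_nth => -> ->.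
by rewrite -walk_nextE -addrA -addn1 PoszD.
Qed.

End Walk.

Theorem lemma5p4 (d : nat) (h v : {perm 'I_d}) (M : nat) (x : int -> letter d) :
  is_walk h v M x ->
  forall w : seq (letter d), w <> [::] -> occurs x w ->
    [/\ at_most_two (Aset x w), at_most_two (Dset x w),
        pi_interval (pi1 h v M) (Aset x w) & pi_interval (@pi0 d) (Dset x w)].
Proof.
move=> walk_x [//|c w] _ _.
have A_next := Aset_walk_next walk_x (c := c) (w := w).
have D_vertex := Dset_vertex walk_x (c := c) (w := w).
split.
- exact: at_most_two_sub A_next (at_most_two_walk_next h v M c.1).
- exact: at_most_two_sub D_vertex (at_most_two_vertex _).
- apply: (pi_interval_consecutive (N := (2 * c.1).+1)) => a /A_next <-.
  exact: pi1_consecutive.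
- apply: (pi_interval_consecutive (N := (2 * walk_next h v M (last c w)).+1)).
  by move=> b /D_vertex <-; exact: pi0_consecutive.
Qed.
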